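(* Let $\varphi(z,x,y)$ satisfy conditions (C1), (C3), (C4), (C5) stated in the context. Assume that $\varphi(z,x,y)$ is twice continuously differentiable in $z$ for almost all $(x,y)\in\Omega\times\Omega$ and satisfies \[ \varphi''(z,x,y)\geq c_7z^{-2}\varphi(z,x,y),\qquad z>0, \] with a constant $c_7$ independent of $z,x,y$. Then $\varphi$ is uniformly convex in the following sense: for every $\varepsilon>0$ there exists $\delta\in(0,1)$ such that \[ \varphi\left(\frac{s+t}{2},x,y\right)\leq (1-\delta)\frac{\varphi(s,x,y)+\varphi(t,x,y)}{2} \] for almost all $(x,y)\in\Omega\times\Omega$ and all $s>0$, $t>0$ with $|s-t|\geq\varepsilon\max\{s,t\}$.
   Context: $\Omega\subseteq\mathbb{R}^d$ is a domain and $\varphi(z,x,y)\ge0$ on $\mathbb{R}_+\times\Omega\times\Omega$. Conditions: (C1) for each $u\in L_{1,loc}(\Omega)$ the function $\varphi(|u(x)-u(y)|,x,y)$ is measurable on $\Omega\times\Omega$; (C3) there are constants $1<p_-\le p_+$ and $\beta\ge1$ such that $r(t)=\varphi(t,x,y)/t^{p_-}$ satisfies $r(s)\le\beta r(t)$ and $r(t)=\varphi(t,x,y)/t^{p_+}$ satisfies $\beta r(s)\ge r(t)$ for all $0\le s\le t$, a.a. $(x,y)$; (C4) $c_1^{-1}\le\varphi(1,x,y)\le c_1$, $\varphi(0,x,y)=0$, $\varphi(t,x,y)>0$ for $t>0$, a.a. $(x,y)$; (C5) $\varphi$ is differentiable in $t>0$ and $0<t\varphi'(t,x,y)\le c_2\varphi(t,x,y)$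 with a constant $c_2>1$. Derivatives $\varphi',\varphi''$ are with respect to the first variable. *)

From mathcomp Require Import all_boot all_order all_algebra.
From mathcomp Require Import all_classical all_reals all_analysis.
Import numFieldNormedType.Exports.
Import Order.TTheory GRing.Theory Num.Theory.

Set Implicit Arguments.
Unset Strict Implicit.
Unset Printing Implicit Defensive.

Local Open Scope classical_set_scope.
Local Open Scope ring_scope.

(* Points of R^n are row vectors 'rV[R]_n.  MathComp-Analysis has no
   Lebesgue measure on R^n, so we define the Lebesgue outer measure by
   covers with closed boxes, as in the textbook construction. *)

Definition in_box (R : realType) (n : nat) (a b : 'rV[R]_n) (z : 'rV[R]_n) : Prop :=
  forall i : 'I_n, a ord0 i <= z ord0 i <= b ord0 i.

Definition box_vol (R : realType) (n : nat) (a b : 'rV[R]_n) : R :=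
  \prod_(i < n) Num.max 0 (b ord0 i - a ord0 i).

Definition lebesgue_outer (R : realType) (n : nat) (A : set 'rV[R]_n) : \bar R :=
  ereal_inf [set v : \bar R | exists a b : nat -> 'rV[R]_n,
     (forall z, A z -> exists k, in_box (a k) (b k) z) /\
     v = (\sum_(0 <= k <oo) (box_vol (a k) (b k))%:E)%E].

Definition lnull (R : realType) (n : nat) (A : set 'rV[R]_n) : Prop :=
  lebesgue_outer A = 0%E.

Definition lmeasurable (R : realType) (n : nat) (E : set 'rV[R]_n) : Prop :=
  forall e : R, 0 < e -> exists G : set 'rV[R]_n,
    open G /\ E `<=` G /\ (lebesgue_outer (G `\` E) <= e%:E)%E.

Definition lmeasurable_fun (R : realType) (n : nat) (D : set 'rV[R]_n)
    (f : 'rV[R]_n -> R) : Prop :=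
  lmeasurable D /\ forall a : R, lmeasurable (D `&` [set z | a < f z]).

(* Lebesgue integral over K of a nonnegative function g (layer-cake formula) *)
Definition lintegral_nonneg (R : realType) (n : nat) (K : set 'rV[R]_n)
    (g : 'rV[R]_n -> R) : \bar R :=
  (\int[@lebesgue_measure R]_(t in [set t : R | (0 <= t)%R])
      lebesgue_outer (K `&` [set z | ((t : R) < g z)%R]))%E.

Definition L1loc (R : realType) (d : nat) (Omega : set 'rV[R]_d)
    (u : 'rV[R]_d -> R) : Prop :=
  lmeasurable_fun Omega u /\
  forall K : set 'rV[R]_d, compact K -> K `<=` Omega ->
    (lintegral_nonneg K (fun x => `|u x|%R) < +oo)%E.

(* Omega x Omega as a subset of R^(d+d), with (x,y) ~ row_mx x y *)
Definition sqset (R : realType) (d : nat) (Omega : set 'rV[R]_d) : set 'rV[R]_(d + d) :=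
  [set z | Omega (lsubmx z) /\ Omega (rsubmx z)].

Definition ae2 (R : realType) (d : nat) (Omega : set 'rV[R]_d)
    (P : 'rV[R]_d -> 'rV[R]_d -> Prop) : Prop :=
  lnull [set z | sqset Omega z /\ ~ P (lsubmx z) (rsubmx z)].

Definition domain (R : realType) (d : nat) (Omega : set 'rV[R]_d) : Prop :=
  Omega !=set0 /\ open Omega /\ connected Omega.

Section Conds.
Variables (R : realType) (d : nat) (Omega : set 'rV[R]_d)
          (phi : R -> 'rV[R]_d -> 'rV[R]_d -> R).

Definition C1 : Prop :=
  forall u : 'rV[R]_d -> R, L1loc Omega u ->
    lmeasurable_fun (sqset Omega)
      (fun z => phi `|u (lsubmx z) - u (rsubmx z)| (lsubmx z) (rsubmx z)).

Definition C3 (pm pp beta : R) : Prop :=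
  1 < pm /\ pm <= pp /\ 1 <= beta /\
  ae2 Omega (fun x y => forall s t : R, 0 < s -> s <= t ->
     phi s x y / s `^ pm <= beta * (phi t x y / t `^ pm) /\
     phi t x y / t `^ pp <= beta * (phi s x y / s `^ pp)).

Definition C4 (c1 : R) : Prop :=
  ae2 Omega (fun x y => c1^-1 <= phi 1 x y <= c1 /\ phi 0 x y = 0 /\
                        forall t : R, 0 < t -> 0 < phi t x y).

Definition C5 (c2 : R) : Prop :=
  1 < c2 /\
  ae2 Omega (fun x y => forall t : R, 0 < t ->
     derivable (fun z => phi z x y) t 1 /\
     0 < t * derive1 (fun z => phi z x y) t <= c2 * phi t x y).

Definition C2_in_z : Prop :=
  ae2 Omega (fun x y => forall z : R, 0 < z ->
     derivable (fun w => phi w x y) z 1 /\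
     derivable (derive1 (fun w => phi w x y)) z 1 /\
     {for z, continuous (derive1 (derive1 (fun w => phi w x y)))}).

Definition second_deriv_bound (c7 : R) : Prop :=
  ae2 Omega (fun x y => forall z : R, 0 < z ->
     c7 * z ^- 2 * phi z x y <= derive1 (derive1 (fun w => phi w x y)) z).

Definition uniformly_convex : Prop :=
  forall eps : R, 0 < eps -> exists delta : R, 0 < delta < 1 /\
    ae2 Omega (fun x y => forall s t : R, 0 < s -> 0 < t ->
      eps * Num.max s t <= `|s - t| ->
      phi ((s + t) / 2) x y <= (1 - delta) * ((phi s x y + phi t x y) / 2)).
End Conds.

(* Write m = (s + t)/2 and m' = (s + 3t)/4 for 0 < s < t.  By the mean value
   theorem and monotonicity of f', the second difference f s + f t - 2 f m is
   at least (f'(m') - f'(m)) (t - m'), and f'' >= c z^-2 f with f increasing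
   gives f'(m') - f'(m) >= c m'^-2 f(m) (m' - m).  Hence
   f s + f t - 2 f m >= (c/16) ((t - s)/t)^2 f m, which for |s - t| >= eps t
   is a fixed fraction k of f m, and rearranging gives
   f m <= (1 - k/(2 + k)) (f s + f t)/2.  The three almost-everywhere
   hypotheses hold simultaneously off a union of null sets. *)

From mathcomp Require Import all_boot all_order all_algebra.
From mathcomp Require Import all_classical all_reals all_analysis.
From mathcomp Require Import ring lra.
Import numFieldNormedType.Exports.
Import Order.TTheory GRing.Theory Num.Theory.
Local Open Scope classical_set_scope.
Local Open Scope ring_scope.

Set Implicit Arguments.
Unset Strict Implicit.
Unset Printing Implicit Defensive.

Definition interleave (T : Type) (u v : nat -> T) (k : nat) : T :=
  if odd k then v k./2 else u k./2.

Lemma nneseries_interleave_le (R : realType) (u v : nat -> \bar R) :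
  (forall k, 0 <= u k)%E -> (forall k, 0 <= v k)%E ->
  (\sum_(0 <= k <oo) interleave u v k <=
   \sum_(0 <= k <oo) u k + \sum_(0 <= k <oo) v k)%E.
Proof.
move=> u_ge0 v_ge0.
have w_ge0 k : (0 <= interleave u v k)%E by rewrite /interleave; case: ifP.
have sum_double N : (\sum_(0 <= k < N.*2) interleave u v k =
    \sum_(0 <= k < N) u k + \sum_(0 <= k < N) v k)%E.
  elim: N => [|N IH]; first by rewrite !big_geq // adde0.
  rewrite doubleS !big_nat_recr //= IH /interleave /= odd_double /=.
  by rewrite uphalf_double doubleK addeACA -!addeA.
apply: lime_le; first exact: is_cvg_nneseries.
apply: nearW => N; apply: (@le_trans _ _ (\sum_(0 <= k < N.*2) interleave u v k)%E).
  rewrite [leRHS](@big_cat_nat _ _ _ N) //=; last by rewrite -addnn leq_addr.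
  by rewrite leeDl // sume_ge0.
by rewrite sum_double; apply: leeD; apply: nneseries_lim_ge.
Qed.

Section LebesgueNull.
Variables (R : realType) (n : nat).

Lemma box_vol_ge0 (a b : 'rV[R]_n) : 0 <= box_vol a b.
Proof. by apply: prodr_ge0 => i _; rewrite le_max lexx. Qed.

Lemma lebesgue_outer_ge0 (A : set 'rV[R]_n) : (0 <= lebesgue_outer A)%E.
Proof.
apply/ereal_infP => _ [a [b [_ ->]]].
by apply: nneseries_ge0 => k _ _; rewrite lee_fin box_vol_ge0.
Qed.

Lemma lnull_sub (A B : set 'rV[R]_n) : A `<=` B -> lnull B -> lnull A.
Proof.
move=> AB nB; apply/eqP; rewrite eq_le lebesgue_outer_ge0 andbT -nB.
apply: ereal_inf_le_tmp => _ [a [b [coverB ->]]].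
by exists a, b; split => // z /AB; apply: coverB.
Qed.

Lemma lnull_cover (A : set 'rV[R]_n) (e : R) : lnull A -> 0 < e ->
  exists a b : nat -> 'rV[R]_n,
    (forall z, A z -> exists k, in_box (a k) (b k) z) /\
    (\sum_(0 <= k <oo) (box_vol (a k) (b k))%:E < e%:E)%E.
Proof.
move=> nA e_gt0.
have finA : lebesgue_outer A \is a fin_num by rewrite nA.
have [_ [a [b [coverA ->]]]] := lb_ereal_inf_adherent e_gt0 finA.
by rewrite -[ereal_inf _]/(lebesgue_outer A) nA add0e => lt_e; exists a, b.
Qed.

Lemma lnullU (A B : set 'rV[R]_n) : lnull A -> lnull B -> lnull (A `|` B).
Proof.
move=> nA nB; apply/eqP; rewrite eq_le lebesgue_outer_ge0 andbT.
apply/lee_addgt0Pr => e e_gt0; rewrite add0e.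
have e2_gt0 : 0 < e / 2 by rewrite divr_gt0.
have [a1 [b1 [coverA sumA]]] := lnull_cover nA e2_gt0.
have [a2 [b2 [coverB sumB]]] := lnull_cover nB e2_gt0.
apply: (@le_trans _ _ (\sum_(0 <= k <oo)
    interleave (fun k => (box_vol (a1 k) (b1 k))%:E)
               (fun k => (box_vol (a2 k) (b2 k))%:E) k)%E).
  apply: ereal_inf_lbound; exists (interleave a1 a2), (interleave b1 b2).
  split; last by apply: eq_eseriesr => k _; rewrite /interleave; case: ifP.
  move=> z [/coverA [k box_k]|/coverB [k box_k]].
    by exists k.*2; rewrite /interleave odd_double doubleK.
  by exists k.*2.+1; rewrite /interleave /= odd_double /= uphalf_double.
apply: le_trans (nneseries_interleave_le _ _) _ => [k|k|]; rewrite ?lee_fin ?box_vol_ge0 //.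
by rewrite [e]splitr EFinD; apply: leeD; apply: ltW.
Qed.
End LebesgueNull.

Section AlmostEverywhere.
Variables (R : realType) (d : nat) (Omega : set 'rV[R]_d).

Lemma ae2W (P Q : 'rV[R]_d -> 'rV[R]_d -> Prop) :
  ae2 Omega P -> (forall x y, P x y -> Q x y) -> ae2 Omega Q.
Proof. by move=> nP PQ; apply: lnull_sub nP => z [Oz nQ]; split => // /PQ. Qed.

Lemma ae2_and (P Q : 'rV[R]_d -> 'rV[R]_d -> Prop) :
  ae2 Omega P -> ae2 Omega Q -> ae2 Omega (fun x y => P x y /\ Q x y).
Proof.
move=> nP nQ; apply: lnull_sub (lnullU nP nQ) => z [Oz /not_andP[nPz|nQz]].
  by left.
by right.
Qed.
End AlmostEverywhere.

Lemma mvt_pos (R : realType) (g : R -> R) (a b : R) :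
  (forall z, 0 < z -> derivable g z 1) -> 0 < a -> a < b ->
  exists2 c, a < c < b & g b - g a = derive1 g c * (b - a).
Proof.
move=> dg a_gt0 ab.
have derive_g x : x \in `]a, b[ -> is_derive x 1 g (derive1 g x).
  rewrite in_itv /= => /andP[ax _]; rewrite derive1E.
  by apply/derivableP/dg/(lt_trans a_gt0).
have cont_g : {within `[a, b], continuous g}.
  apply: derivable_within_continuous => x; rewrite in_itv /= => /andP[ax _].
  exact/dg/(lt_le_trans a_gt0).
have [c c_ab ->] := MVT ab derive_g cont_g.
by exists c => //; rewrite in_itv in c_ab.
Qed.

Lemma ger0_derive1_ndecr_pos (R : realType) (g : R -> R) (a b : R) :
  (forall z, 0 < z -> derivable g z 1) ->
  (forall z, 0 < z -> 0 <= derive1 g z) ->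
  0 < a -> a <= b -> g a <= g b.
Proof.
move=> dg g'_ge0 a_gt0; rewrite le_eqVlt => /predU1P[-> //|ab].
rewrite -subr_ge0; have [c /andP[ac _] ->] := mvt_pos dg a_gt0 ab.
rewrite mulr_ge0 ?subr_ge0 ?(ltW ab) //.
exact/g'_ge0/(lt_trans a_gt0).
Qed.

Definition uconvex_delta (R : numFieldType) (c eps : R) : R :=
  c * eps ^+ 2 / 16 / (2 + c * eps ^+ 2 / 16).

Lemma uconvex_delta_itv (R : realFieldType) (c eps : R) : 0 < c -> 0 < eps ->
  0 < uconvex_delta c eps < 1.
Proof.
move=> c_gt0 eps_gt0; have k_gt0 : 0 < c * eps ^+ 2 / 16.
  by rewrite divr_gt0 ?mulr_gt0 ?exprn_gt0.
by rewrite divr_gt0 ?ltr_pdivrMr ?mul1r; lra.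
Qed.

Section SecondDifference.
Variables (R : realType) (f : R -> R) (c : R).
Hypotheses (c_gt0 : 0 < c) (f_gt0 : forall z, 0 < z -> 0 < f z).
Hypotheses (df : forall z, 0 < z -> derivable f z 1)
  (f'_gt0 : forall z, 0 < z -> 0 < derive1 f z).
Hypotheses (df' : forall z, 0 < z -> derivable (derive1 f) z 1)
  (f''_ge : forall z, 0 < z -> c * z ^- 2 * f z <= derive1 (derive1 f) z).

Let f''_gt0 z : 0 < z -> 0 < derive1 (derive1 f) z.
Proof.
move=> z_gt0; apply: lt_le_trans (f''_ge z_gt0).
by rewrite !mulr_gt0 ?f_gt0 ?invr_gt0 ?exprn_gt0.
Qed.

Let f_ndecr a b : 0 < a -> a <= b -> f a <= f b.
Proof. by apply: ger0_derive1_ndecr_pos => // z /f'_gt0 /ltW. Qed.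

Let f'_ndecr a b : 0 < a -> a <= b -> derive1 f a <= derive1 f b.
Proof. by apply: ger0_derive1_ndecr_pos => // z /f''_gt0 /ltW. Qed.

Lemma secant_le_derive1_right a b : 0 < a -> a < b ->
  f b - f a <= derive1 f b * (b - a).
Proof.
move=> a_gt0 ab; have [z /andP[az zb] ->] := mvt_pos df a_gt0 ab.
by rewrite ler_wpM2r ?subr_ge0 ?(ltW ab) ?f'_ndecr ?(ltW zb) ?(lt_trans a_gt0).
Qed.

Lemma derive1_left_le_secant a b : 0 < a -> a < b ->
  derive1 f a * (b - a) <= f b - f a.
Proof.
move=> a_gt0 ab; have [z /andP[az _] ->] := mvt_pos df a_gt0 ab.
by rewrite ler_wpM2r ?subr_ge0 ?(ltW ab) ?f'_ndecr ?(ltW az).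
Qed.

Lemma derive1_increment_ge a b : 0 < a -> a < b ->
  c * b ^- 2 * f a * (b - a) <= derive1 f b - derive1 f a.
Proof.
move=> a_gt0 ab; have [z /andP[az zb] ->] := mvt_pos df' a_gt0 ab.
have z_gt0 : 0 < z by apply: lt_trans az.
have b_gt0 : 0 < b by apply: lt_trans zb.
have inv_le : b ^- 2 <= z ^- 2.
  by rewrite lef_pV2 ?posrE ?exprn_gt0 // lerXn2r ?nnegrE ?ltW.
have fa_le : f a <= f z by rewrite f_ndecr ?ltW.
rewrite ler_wpM2r ?subr_ge0 ?(ltW ab) //; apply: le_trans (f''_ge z_gt0).
rewrite -!mulrA ler_wpM2l ?(ltW c_gt0) //.
by rewrite ler_pM ?invr_ge0 ?exprn_ge0 ?(ltW b_gt0) ?(ltW (f_gt0 a_gt0)).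
Qed.

Lemma second_difference_ge s t : 0 < s -> s < t ->
  c / 16 * ((t - s) / t) ^+ 2 * f ((s + t) / 2)
    <= f s + f t - 2 * f ((s + t) / 2).
Proof.
move=> s_gt0 st; set m := (s + t) / 2; set m' := (s + 3 * t) / 4.
have [sm mm' m't] : [/\ s < m, m < m' & m' < t] by rewrite /m /m'; split; lra.
have m_gt0 : 0 < m by apply: lt_trans sm.
have m'_gt0 : 0 < m' by apply: lt_trans mm'.
have left_half := secant_le_derive1_right s_gt0 sm.
have near_right := derive1_left_le_secant m_gt0 mm'.
have far_right := derive1_left_le_secant m'_gt0 m't.
have tm'_ge0 : 0 <= t - m' by rewrite subr_ge0 ltW.
have gap := ler_wpM2r tm'_ge0 (derive1_increment_ge m_gt0 mm').
have scale : c / 16 * ((t - s) / t) ^+ 2 * f m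
    <= c * m' ^- 2 * f m * (m' - m) * (t - m').
  have -> : c * m' ^- 2 * f m * (m' - m) * (t - m')
      = c / 16 * ((t - s) / m') ^+ 2 * f m.
    by rewrite /m /m'; field; lra.
  have t_gt0 : 0 < t by apply: lt_trans st.
  have ts_ge0 : 0 <= t - s by rewrite subr_ge0 ltW.
  have frac_le : (t - s) / t <= (t - s) / m'.
    by rewrite ler_pdivrMr // mulrAC ler_pdivlMr // ler_wpM2l // ltW.
  rewrite ler_wpM2r ?(ltW (f_gt0 m_gt0)) // ler_wpM2l ?divr_ge0 ?(ltW c_gt0) //.
  by rewrite lerXn2r // nnegrE divr_ge0 // ltW.
move: left_half near_right far_right gap scale; rewrite /m /m'; lra.
Qed.

Lemma midpoint_le_lt eps s t : 0 < eps -> 0 < s -> s < t -> eps * t <= t - s ->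
  f ((s + t) / 2) <= (1 - uconvex_delta c eps) * ((f s + f t) / 2).
Proof.
move=> eps_gt0 s_gt0 st eps_st; rewrite /uconvex_delta.
set k := c * eps ^+ 2 / 16; set fm := f ((s + t) / 2).
have k_gt0 : 0 < k by rewrite divr_gt0 ?mulr_gt0 ?exprn_gt0.
have fm_gt0 : 0 < fm by rewrite f_gt0 //; lra.
have eps_le : eps <= (t - s) / t by rewrite ler_pdivlMr // (lt_trans s_gt0 st).
have k_le : k * fm <= c / 16 * ((t - s) / t) ^+ 2 * fm.
  rewrite ler_wpM2r ?(ltW fm_gt0) // /k mulrAC ler_wpM2l ?divr_ge0 ?(ltW c_gt0) //.
  by rewrite lerXn2r ?nnegrE ?(ltW eps_gt0) ?(le_trans (ltW eps_gt0)).
have := le_trans k_le (second_difference_ge s_gt0 st); rewrite -/fm => gain.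
have -> : (1 - k / (2 + k)) * ((f s + f t) / 2) = (f s + f t) / (2 + k).
  by field; lra.
rewrite ler_pdivlMr; last lra.
by rewrite mulrDr mulr_natr; lra.
Qed.

Lemma midpoint_le eps s t : 0 < eps -> 0 < s -> 0 < t ->
  eps * Num.max s t <= `|s - t| ->
  f ((s + t) / 2) <= (1 - uconvex_delta c eps) * ((f s + f t) / 2).
Proof.
move=> eps_gt0 s_gt0 t_gt0; wlog st : s t s_gt0 t_gt0 / s <= t => [sym|].
  have /orP[st|ts] := le_total s t; first exact: sym.
  by rewrite maxC distrC [s + t]addrC [f s + _]addrC; apply: sym.
move: st; rewrite le_eqVlt => /predU1P[<-|st].
  by rewrite subrr normr0 maxxx pmulr_rle0 // => /(lt_le_trans s_gt0); rewrite ltxx.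
rewrite (max_idPr (ltW st)) distrC ger0_norm ?subr_ge0 ?(ltW st) //.
exact: midpoint_le_lt.
Qed.
End SecondDifference.

Theorem lemma2p1 (R : realType) (d : nat) (Omega : set 'rV[R]_d)
    (phi : R -> 'rV[R]_d -> 'rV[R]_d -> R)
    (pm pp beta c1 c2 c7 : R) :
  domain Omega ->
  C1 Omega phi ->
  C3 Omega phi pm pp beta ->
  C4 Omega phi c1 ->
  C5 Omega phi c2 ->
  C2_in_z Omega phi ->
  0 < c7 ->
  second_deriv_bound Omega phi c7 ->
  uniformly_convex Omega phi.
Proof.
move=> _ _ _ _ [c2_gt1 phi'_bounds] phi_C2 c7_gt0 phi''_ge eps eps_gt0.
exists (uconvex_delta c7 eps); split; first exact: uconvex_delta_itv.
apply: ae2W (ae2_and phi'_bounds (ae2_and phi_C2 phi''_ge)) _.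
move=> x y [bounds [C2xy f''_ge]]; pose f z := phi z x y.
have df z : 0 < z -> derivable f z 1 by move=> /bounds[].
have f'_gt0 z : 0 < z -> 0 < derive1 f z.
  by move=> z_gt0; have [_ /andP[+ _]] := bounds z z_gt0; rewrite pmulr_rgt0.
have f_gt0 z : 0 < z -> 0 < f z.
  move=> z_gt0; have [_ /andP[tf'_gt0 tf'_le]] := bounds z z_gt0.
  by have := lt_le_trans tf'_gt0 tf'_le; rewrite pmulr_rgt0 //; lra.
have df' z : 0 < z -> derivable (derive1 f) z 1 by move=> /C2xy[_ [df'z _]].
by move=> s t; apply: (midpoint_le c7_gt0 f_gt0 df f'_gt0 df' f''_ge).
Qed.
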